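(* Let $\Psi\subseteq\Omega$ be nonempty, $D=D(\Psi)$, $B\subseteq D$, and let $c=(c_{\underline\psi})_\Psi\in C^\perp(V_B,\Psi)$, i.e. $\sum_{\underline\psi\in\Psi}c_{\underline\psi}\underline\psi^{\underline b}=0$ for all $\underline b\in B$. Let $h=(h_{\underline d})_D=\mathcal{P}_\Psi(c)$ (so $c=\mathcal{C}_\Psi(h)$). Let $\emptyset\neq\Phi\subseteq\Psi$ with $D(\Phi)\subseteq B$, let $e=(e_{\underline\psi})_\Psi\in V_\Psi$ with $e_{\underline\psi}=0$ for $\underline\psi\notin\Phi$, let $r=c+e$, and put $\tilde r_{\underline d}=\sum_{\underline\psi\in\Psi}r_{\underline\psi}\underline\psi^{\underline d}$ for $\underline d\in D$. Then: (i) $h_{\underline b}=0$ and $\tilde r_{\underline b}=\sum_{\underline\phi\in\Phi}e_{\underline\phi}\underline\phi^{\underline b}$ for all $\underline b\in B$; (ii) if $(k_{\underline a})_A=\mathcal{E}_\Phi\big((\tilde r_{\underline d})_{\underline d\in D(\Phi)}\big)$, then $h_{\underline d}=\tilde r_{\underline d}-k_{\underline d}$ for all $\underline d\in D$; (iii) $\mathcal{C}_\Phi\big((\tilde r_{\underline d})_{\underline d\in D(\Phi)}\big)=(e_{\underline\phi})_{\underline\phi\in\Phi}$, hence $c$ is recovered as $r$ minus the extension by zero of this vector.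
   Context: Let $q$ be a prime power, $N\ge1$, $A=\{0,\dots,q-1\}^N$, $\Omega=\mathbb{F}_q^N$, $V_S$ the $\mathbb{F}_q$-vector space of vectors indexed by a finite set $S$; $\underline\psi^{\underline d}=\psi_1^{d_1}\cdots\psi_N^{d_N}$ with $0^0=1$. Fix a monomial order $\preceq$ on $\mathbb{F}_q[x_1,\dots,x_N]$. For nonempty $\Theta\subseteq\Omega$: $Z_\Theta$ is the ideal of polynomials vanishing on $\Theta$; the delta set $D(\Theta)$ is the set of $\underline d\in\mathbb{N}_0^N$ with $\underline x^{\underline d}$ not the leading monomial of a nonzero element of $Z_\Theta$ (note $D(\Theta)\subseteq A$, and $D(\Phi)\subseteq D(\Psi)$ for $\Phi\subseteq\Psi$); $\mathcal{P}_\Theta:V_\Theta\to V_{D(\Theta)}$, $(c_{\underline\theta})\mapsto(\sum_{\underline\theta\in\Theta}c_{\underline\theta}\underline\theta^{\underline d})_{\underline d\in D(\Theta)}$ is an isomorphism and $\mathcal{C}_\Theta=\mathcal{P}_\Theta^{-1}$, which equals $\mathcal{R}_\Theta\circ\mathcal{F}^{-1}\circ\mathcal{E}_\Theta$ where $\mathcal{R}_\Theta$ is restriction to $\Theta$, $\mathcal{F}^{-1}$ is the generalized inverse DFT $V_A\to V_\Omega$, and $\mathcal{E}_\Theta:V_{D(\Theta)}\to V_A$ is the extension map: $(h_{\underline d})\mapsto(h_{\underline a})_A$ with $h_{\underline a}=\sum_{\underline d\in D(\Theta)}v^{(\underline a)}_{\underline d}h_{\underline d}$, where $\sum_{\underline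 d}v^{(\underline a)}_{\underline d}\underline x^{\underline d}$ is the remainder of $\underline x^{\underline a}$ on division by a Gröbner basis of $Z_\Theta$. For $B\subseteq D(\Psi)$, $C^\perp(V_B,\Psi)=\{(c_{\underline\psi})_\Psi:\sum_{\underline\psi}c_{\underline\psi}\underline\psi^{\underline b}=0\ \forall\underline b\in B\}$. *)

From HB Require Import structures.
From mathcomp Require Import all_boot all_order all_algebra.
From Stdlib Require Import ClassicalEpsilon.
Set Implicit Arguments. Unset Strict Implicit. Unset Printing Implicit Defensive.
Import GRing.Theory.
Local Open Scope ring_scope.

Definition pdec (P : Prop) : bool :=
  if excluded_middle_informative P then true else false.

Section Defs.
Variables (F : finFieldType) (N : nat).

Definition mono := {ffun 'I_N -> nat}.
Definition madd (a b : mono) : mono := [ffun i => (a i + b i)%N].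
Definition mzero : mono := [ffun _ => 0%N].

Definition pt := 'rV[F]_N.

(* psi^d = prod_i psi_i^{d_i}, with 0^0 = 1 *)
Definition mpow (x : pt) (d : mono) : F := \prod_(i < N) (x ord0 i) ^+ (d i).

(* A = {0,...,q-1}^N, q = #|F|, as a finite type, embedded into mono *)
Definition Aq := {ffun 'I_N -> 'I_#|F|}.
Definition embed (a : Aq) : mono := [ffun i => nat_of_ord (a i)].

Definition monomial_order (le : rel mono) : Prop :=
  [/\ reflexive le, antisymmetric le, transitive le & total le] /\
  (forall a b c, le a b -> le (madd a c) (madd b c)) /\
  well_founded (fun a b => le a b && (a != b)).

(* a polynomial is given by a list of monomials s and coefficients c:
   p = sum_{m in undup s} c m x^m *)
Definition peval (s : seq mono) (c : mono -> F) (x : pt) : F :=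
  \sum_(m <- undup s) c m * mpow x m.

Definition vanishes (Theta : {set pt}) (s : seq mono) (c : mono -> F) : Prop :=
  forall x, x \in Theta -> peval s c x = 0.

Definition isLM (le : rel mono) (Theta : {set pt}) (d : mono) : Prop :=
  exists (s : seq mono) (c : mono -> F),
    [/\ vanishes Theta s c, d \in s, c d != 0
      & forall m, m \in s -> c m != 0 -> le m d].

(* the delta set D(Theta) (which is contained in A) *)
Definition Dset (le : rel mono) (Theta : {set pt}) : {set Aq} :=
  [set a : Aq | pdec (~ isLM le Theta (embed a))].

(* the map P_Theta : V_Theta -> V_{D(Theta)} (vectors are functions;
   only indices in Theta, resp. D(Theta), are relevant) *)
Definition Pmap (Theta : {set pt}) (c : pt -> F) (d : Aq) : F :=
  \sum_(x in Theta) c x * mpow x (embed d).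

(* v gives the remainders: for each a in A, sum_{d in D(Theta)} v a d x^d is the
   remainder of x^a modulo a Groebner basis of Z_Theta, i.e. the polynomial
   supported on D(Theta) with x^a - remainder in Z_Theta. *)
Definition is_remainder (le : rel mono) (Theta : {set pt}) (v : Aq -> Aq -> F) : Prop :=
  forall a : Aq, vanishes Theta (embed a :: [seq embed d | d <- enum (Dset le Theta)])
    (fun m => (if m == embed a then 1 else 0)
              - \sum_(d in Dset le Theta | embed d == m) v a d).

Definition Emap (le : rel mono) (Theta : {set pt}) (v : Aq -> Aq -> F)
  (h : Aq -> F) (a : Aq) : F :=
  \sum_(d in Dset le Theta) v a d * h d.

End Defs.

From HB Require Import structures.
From mathcomp Require Import all_boot all_order all_algebra finfield.
From Stdlib Require Import Classical ClassicalEpsilon.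
Import GRing.Theory.
Set Implicit Arguments. Unset Strict Implicit.
Local Open Scope ring_scope.

(* Everything rests on the "moments" sum_{x in Theta} z_x x^m of a vector z
   indexed by points Theta of F_q^N; P_Theta is the family of moments with
   exponents in the delta set D(Theta).  The central fact is that P_Theta is
   injective (Pmap_injective): if z is nonzero on Theta, pairing z with a
   polynomial indicator function shows that some moment is nonzero; a least
   such exponent m (for the monomial order) has all entries below q, since
   x^q = x allows lowering larger exponents, and m is not the leading monomial
   of any p in Z_Theta, since 0 = sum_x z_x p(x) would otherwise isolate
   lc(p) * moment(m).  Hence m lies in D(Theta).  Second, the remainders v
   express x^a through the monomials of D(Theta) on Theta, so the extension
   map E_Theta reproduces every moment from those on D(Theta) (Emap_Pmap).

   The theorem then follows: moments of c vanish on B, so on B the received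
   moments rt are the moments of the error e, which lives on Phi; these
   determine e by injectivity of P_Phi, and all other moments via E_Phi. *)

Lemma sum_fibers (R : nmodType) (I : finType) (J : eqType) (us : seq J) (P : pred I)
    (f : I -> J) (g : I -> J -> R) :
  uniq us -> (forall i, P i -> f i \in us) ->
  \sum_(j <- us) \sum_(i | P i && (f i == j)) g i j = \sum_(i | P i) g i (f i).
Proof.
move=> us_uniq f_us; rewrite -(exchange_big_dep xpredT) //=.
apply: eq_bigr => i Pi; rewrite -big_filter.
have -> : [seq j <- us | f i == j] = [:: f i].
  by rewrite -(filter_pred1_uniq us_uniq (f_us i Pi)); apply: eq_filter => j; apply: eq_sym.
by rewrite big_seq1.
Qed.

Section Moments.
Variables (F : finFieldType) (N : nat).
Implicit Types (y : pt F N) (a b m : mono N) (Theta : {set pt F N}) (z : pt F N -> F).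

Lemma mpow_madd y a b : mpow y (madd a b) = mpow y a * mpow y b.
Proof. by rewrite /mpow -big_split /=; apply: eq_bigr => i _; rewrite ffunE exprD. Qed.

Lemma mpow0 y : mpow y (mzero N) = 1.
Proof. by rewrite /mpow; apply: big1 => i _; rewrite ffunE expr0. Qed.

Definition moment Theta z m : F := \sum_(x in Theta) z x * mpow x m.

Lemma Pmap_moment Theta z (d : Aq F N) : Pmap Theta z d = moment Theta z (embed d).
Proof. by []. Qed.

Lemma moment_lincomb (I : Type) (r : seq I) (P : pred I) (k : I -> F)
    (mon : I -> mono N) Theta z :
  \sum_(x in Theta) z x * (\sum_(i <- r | P i) k i * mpow x (mon i)) =
  \sum_(i <- r | P i) k i * moment Theta z (mon i).
Proof.
under eq_bigr do rewrite mulr_sumr.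
rewrite exchange_big; apply: eq_bigr => i _.
by rewrite /moment mulr_sumr; apply: eq_bigr => x _; rewrite mulrCA.
Qed.

Lemma moment_support Theta Theta' z m :
  Theta \subset Theta' -> (forall x, x \in Theta' -> x \notin Theta -> z x = 0) ->
  moment Theta' z m = moment Theta z m.
Proof.
move=> sub z0; rewrite /moment (bigID (mem Theta)) /= [X in _ + X]big1 ?addr0.
  by apply: eq_bigl => x; rewrite andb_idl // => /(subsetP sub).
by move=> x /andP[xT' xT]; rewrite z0 ?mul0r.
Qed.

Lemma Pmap_add Theta (z1 z2 : pt F N -> F) d :
  Pmap Theta (fun x => z1 x + z2 x) d = Pmap Theta z1 d + Pmap Theta z2 d.
Proof. by rewrite /Pmap -big_split; apply: eq_bigr => x _; rewrite mulrDl. Qed.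

Lemma Pmap_sub Theta (z1 z2 : pt F N -> F) d :
  Pmap Theta (fun x => z1 x - z2 x) d = Pmap Theta z1 d - Pmap Theta z2 d.
Proof. by rewrite /Pmap -sumrB; apply: eq_bigr => x _; rewrite mulrBl. Qed.

End Moments.

Section FiniteFieldPowers.
Variable F : finFieldType.

Lemma card_field_gt0 : (0 < #|F|)%N.
Proof. exact: ltnW (card_finNzRing_gt1 F). Qed.

Lemma card_pred_gt0 : (0 < #|F|.-1)%N.
Proof. by rewrite -ltnS (prednK card_field_gt0) card_finNzRing_gt1. Qed.

Lemma expf_card_pred (t : F) : t != 0 -> t ^+ #|F|.-1 = 1.
Proof.
by move=> t0; apply: (mulfI t0); rewrite mulr1 -exprS (prednK card_field_gt0) expf_card.
Qed.

Lemma expf_shift (t : F) k : (0 < k)%N -> t ^+ (k + #|F|.-1) = t ^+ k.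
Proof.
move=> k0; rewrite -(prednK k0) addSn -addnS (prednK card_field_gt0).
by rewrite exprD expf_card exprS mulrC.
Qed.

End FiniteFieldPowers.

Section Indicator.
Variables (F : finFieldType) (N : nat).
Implicit Types (f g : pt F N -> F) (y : pt F N).

Definition polyfun f : Prop :=
  exists l : seq (F * mono N), forall y, f y = \sum_(p <- l) p.1 * mpow y p.2.

Lemma polyfun_ext f g : polyfun f -> f =1 g -> polyfun g.
Proof. by move=> [l fl] fg; exists l => y; rewrite -fg. Qed.

Lemma polyfun_const (k : F) : polyfun (fun=> k).
Proof. by exists [:: (k, mzero N)] => y; rewrite big_seq1 /= mpow0 mulr1. Qed.

Lemma polyfun_coord (i : 'I_N) : polyfun (fun y => y ord0 i).
Proof.
exists [:: (1, [ffun j => nat_of_bool (j == i)])] => y.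
rewrite big_seq1 /= mul1r /mpow (bigD1 i) //= ffunE eqxx expr1 big1 ?mulr1 //.
by move=> j /negbTE ji; rewrite ffunE ji expr0.
Qed.

Lemma polyfun_add f g : polyfun f -> polyfun g -> polyfun (fun y => f y + g y).
Proof. by move=> [l1 f1] [l2 g2]; exists (l1 ++ l2) => y; rewrite big_cat f1 g2. Qed.

Lemma polyfun_mul f g : polyfun f -> polyfun g -> polyfun (fun y => f y * g y).
Proof.
move=> [l1 f1] [l2 g2]; exists [seq (p.1 * q.1, madd p.2 q.2) | p <- l1, q <- l2] => y.
rewrite f1 g2 big_allpairs_dep /= mulr_suml; apply: eq_bigr => p _.
by rewrite mulr_sumr; apply: eq_bigr => q _ /=; rewrite mpow_madd mulrACA.
Qed.

Lemma polyfun_exp f n : polyfun f -> polyfun (fun y => f y ^+ n).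
Proof.
move=> pf; elim: n => [|n IH]; first exact: polyfun_const.
by apply: polyfun_ext (polyfun_mul pf IH) _ => y; rewrite exprS.
Qed.

Lemma polyfun_prod (I : Type) (r : seq I) (g : I -> pt F N -> F) :
  (forall i, polyfun (g i)) -> polyfun (fun y => \prod_(i <- r) g i y).
Proof.
move=> pg; elim: r => [|i r IH].
  by apply: polyfun_ext (polyfun_const 1) _ => y; rewrite big_nil.
by apply: polyfun_ext (polyfun_mul (pg i) IH) _ => y; rewrite big_cons.
Qed.

Definition indicator (x0 y : pt F N) : F :=
  \prod_(i < N) (1 - (y ord0 i - x0 ord0 i) ^+ #|F|.-1).

Lemma indicator_polyfun x0 : polyfun (indicator x0).
Proof.
apply: polyfun_prod => i.
apply: polyfun_add (polyfun_const 1) _; apply: polyfun_ext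
  (polyfun_mul (polyfun_const (-1)) (polyfun_exp _ (polyfun_add (polyfun_coord i)
     (polyfun_const (- x0 ord0 i))))) _.
by move=> y; rewrite mulN1r.
Qed.

Lemma indicator_id x0 : indicator x0 x0 = 1.
Proof.
apply: big1 => i _; rewrite subrr expr0n /=.
by rewrite -(prednK (card_pred_gt0 F)) subr0.
Qed.

Lemma indicator_neq x0 y : y != x0 -> indicator x0 y = 0.
Proof.
move=> yx0; have [i yi] : exists i, y ord0 i != x0 ord0 i.
  apply/existsP; apply: contraR yx0 => /existsPn same.
  by apply/eqP/rowP => j; apply/eqP; rewrite -[_ == _]negbK.
by rewrite /indicator (bigD1 i) //= expf_card_pred ?subr_eq0 // subrr mul0r.
Qed.

(* a nonzero vector on Theta has a nonzero moment: pair it with an indicator *)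
Lemma exists_nonzero_moment (Theta : {set pt F N}) (z : pt F N -> F) x0 :
  x0 \in Theta -> z x0 != 0 -> exists m, moment Theta z m != 0.
Proof.
move=> x0T zx0; have [l indl] := indicator_polyfun x0.
have : \sum_(x in Theta) z x * indicator x0 x = z x0.
  rewrite (bigD1 x0) //= indicator_id mulr1 big1 ?addr0 // => x /andP[_ xx0].
  by rewrite indicator_neq // mulr0.
under eq_bigr do rewrite indl; rewrite moment_lincomb => sum_zx0.
apply: NNPP => no_m; move: zx0; rewrite -sum_zx0 big1 ?eqxx // => p _.
by case: (eqVneq (moment Theta z p.2) 0) => [->|nz]; [rewrite mulr0 | case: no_m; exists p.2].
Qed.

End Indicator.

Section MonomialOrder.
Variables (N : nat) (le : rel (mono N)).
Hypothesis le_order : monomial_order le.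
Implicit Types (a b u : mono N).

Definition mscale (k : nat) u : mono N := [ffun j => (k * u j)%N].

(* 0 is the least monomial: otherwise u, 2u, 3u, ... would descend forever *)
Lemma mzero_le u : le (mzero N) u.
Proof.
have [[le_refl _ _ le_total] [le_add le_wf]] := le_order.
case/orP: (le_total (mzero N) u) => // le_u0.
have [->|u_neq0] := eqVneq u (mzero N); first exact: le_refl.
have descend k : le (mscale k.+1 u) (mscale k u) && (mscale k.+1 u != mscale k u).
  apply/andP; split.
    have := le_add _ _ (mscale k u) le_u0.
    have -> : madd u (mscale k u) = mscale k.+1 u.
      by apply/ffunP => j; rewrite !ffunE mulSn.
    suff -> : madd (mzero N) (mscale k u) = mscale k u by [].
    by apply/ffunP => j; rewrite !ffunE.
  apply: contra u_neq0 => /eqP /ffunP uk; apply/eqP/ffunP => j.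
  by move/eqP: (uk j); rewrite !ffunE mulSn -{2}[(k * u j)%N]add0n eqn_add2r => /eqP.
suff no_chain : forall a, Acc (fun a b => le a b && (a != b)) a ->
    forall k, a <> mscale k u.
  by case: (no_chain _ (le_wf _) 0%N erefl).
move=> a; elim=> {}a _ IH k Ea.
by apply: (IH (mscale k.+1 u)) _ k.+1 erefl; rewrite Ea.
Qed.

Lemma le_maddl a b : le a (madd b a).
Proof.
have := le_order.2.1 _ _ a (mzero_le b).
suff -> : madd (mzero N) a = a by [].
by apply/ffunP => j; rewrite !ffunE.
Qed.

Lemma wf_minimal (P : pred (mono N)) :
  (exists m, P m) -> exists m, P m /\ forall m', le m' m -> m' != m -> ~~ P m'.
Proof.
move=> [m Pm]; elim: (le_order.2.2 m) Pm => {}m _ IH Pm.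
case: (classic (exists m', [/\ le m' m, m' != m & P m'])) => [[m' [m'm m'_neq Pm']]|].
  by apply: IH Pm'; rewrite m'm m'_neq.
move=> none; exists m; split => // m' m'm m'_neq; apply/negP => Pm'.
by apply: none; exists m'.
Qed.

End MonomialOrder.

Section DeltaSet.
Variables (F : finFieldType) (N : nat) (le : rel (mono N)).
Hypothesis le_order : monomial_order le.
Variable Theta : {set pt F N}.

Lemma notin_Dset_isLM (a : Aq F N) : a \notin Dset le Theta -> isLM le Theta (embed a).
Proof.
rewrite inE /pdec; case: excluded_middle_informative => // notLM _.
exact: NNPP.
Qed.

Section MinimalMoment.
Variables (z : pt F N -> F) (m : mono N).
Hypothesis moment_m : moment Theta z m != 0.
Hypothesis moment_below : forall m', le m' m -> m' != m -> moment Theta z m' = 0.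

(* since t^q = t on F_q, an exponent >= q can be lowered by q-1 without
   changing the moment, producing a smaller monomial *)
Lemma minimal_moment_reduced i : (m i < #|F|)%N.
Proof.
rewrite ltnNge; apply/negP => big_mi.
have [k k_gt0 mi_eq] : exists2 k, (0 < k)%N & (k + #|F|.-1)%N = m i.
  exists (m i - #|F|.-1)%N; last by rewrite subnK // (leq_trans (leq_pred _)).
  by rewrite subn_gt0 (leq_trans _ big_mi) // prednK ?card_field_gt0.
pose w : mono N := [ffun j => if j == i then #|F|.-1 else 0%N].
pose m' : mono N := [ffun j => if j == i then k else m j].
have m_eq : m = madd w m'.
  by apply/ffunP => j; rewrite !ffunE; case: eqP => [->|//]; rewrite addnC mi_eq.
have same_pow (x : pt F N) : mpow x m' = mpow x m.
  rewrite /mpow; apply: eq_bigr => j _; rewrite ffunE.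
  by case: eqP => [->|//]; rewrite -mi_eq expf_shift.
have m'_neq : m' != m.
  apply/eqP => /ffunP /(_ i); rewrite ffunE eqxx => k_mi.
  have /addnI q_one : (k + #|F|.-1 = k + 0)%N by rewrite addn0 mi_eq k_mi.
  by move: (card_pred_gt0 F); rewrite q_one.
have le_m'm : le m' m by rewrite m_eq le_maddl.
have : moment Theta z m' = moment Theta z m.
  by apply: eq_bigr => x _; rewrite same_pow.
by rewrite moment_below // => /esym m0; move: moment_m; rewrite m0 eqxx.
Qed.

(* a leading monomial m of some p in Z_Theta would give
   0 = sum_x z x p(x) = lc(p) * moment m + (moments of smaller monomials) *)
Lemma minimal_moment_not_leading : ~ isLM le Theta m.
Proof.
move=> [s [c [vanish ms cm lead]]].
have : \sum_(x in Theta) z x * peval s c x = 0.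
  by rewrite big1 // => x xT; rewrite vanish ?mulr0.
rewrite /peval moment_lincomb (bigD1_seq m) ?mem_undup ?undup_uniq //= big1_seq.
  by rewrite addr0 => /eqP; rewrite mulf_eq0 (negbTE cm) (negbTE moment_m).
move=> m' /andP[m'_neq m's]; have [->|cm'] := eqVneq (c m') 0; first by rewrite mul0r.
by rewrite moment_below ?mulr0 // lead // -mem_undup.
Qed.

End MinimalMoment.

Lemma Pmap_injective (z : pt F N -> F) :
  (forall d, d \in Dset le Theta -> Pmap Theta z d = 0) ->
  forall x, x \in Theta -> z x = 0.
Proof.
move=> Pz0 x0 x0T; apply/eqP; apply: contraT => zx0.
have [m [mz m_min]] := wf_minimal le_order (exists_nonzero_moment x0T zx0).
have below m' : le m' m -> m' != m -> moment Theta z m' = 0.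
  by move=> m'm m'_neq; apply/eqP; rewrite -[_ == _]negbK m_min.
pose a : Aq F N := [ffun j => Ordinal (minimal_moment_reduced mz below j)].
have ea : embed a = m by apply/ffunP => j; rewrite !ffunE.
have [aD|aD] := boolP (a \in Dset le Theta).
  by move: (mz); rewrite -ea -Pmap_moment Pz0 ?eqxx.
by case: (minimal_moment_not_leading mz below); rewrite -ea; apply: notin_Dset_isLM.
Qed.

Lemma remainder_eval v : is_remainder le Theta v ->
  forall (a : Aq F N) x, x \in Theta ->
  mpow x (embed a) = \sum_(d in Dset le Theta) v a d * mpow x (embed d).
Proof.
move=> rem a x xT; have := rem a x xT; rewrite /peval.
set s := embed a :: _.
have a_us : embed a \in undup s by rewrite mem_undup mem_head.
have D_us d : d \in Dset le Theta -> embed d \in undup s.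
  by move=> dD; rewrite mem_undup inE map_f ?orbT ?mem_enum.
under eq_bigr do rewrite mulrBl mulr_suml; rewrite sumrB sum_fibers ?undup_uniq //.
rewrite (bigD1_seq _ a_us) ?undup_uniq //= eqxx mul1r big1_seq ?addr0; last first.
  by move=> m /andP[/negbTE -> _]; rewrite mul0r.
by move/eqP; rewrite subr_eq0 => /eqP.
Qed.

Lemma Emap_Pmap v (z : pt F N -> F) : is_remainder le Theta v ->
  Emap le Theta v (Pmap Theta z) =1 Pmap Theta z.
Proof.
move=> rem a; rewrite [RHS]/Pmap.
under eq_bigr => x xT do rewrite (remainder_eval rem a xT).
by rewrite moment_lincomb.
Qed.

End DeltaSet.

Theorem mainTheorem8 (F : finFieldType) (N : nat) (le : rel (mono N))
  (Hle : monomial_order le)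
  (Psi : {set pt F N}) (HPsi : Psi != set0)
  (B : {set Aq F N}) (HB : B \subset Dset le Psi)
  (c : pt F N -> F)
  (Hc : forall b, b \in B -> \sum_(psi in Psi) c psi * mpow psi (embed b) = 0)
  (Phi : {set pt F N}) (HPhi0 : Phi != set0) (HPhi : Phi \subset Psi)
  (HDPhi : Dset le Phi \subset B)
  (e : pt F N -> F) (He : forall psi, psi \in Psi -> psi \notin Phi -> e psi = 0) :
  let h := Pmap Psi c in
  let r := fun psi => c psi + e psi in
  let rt := Pmap Psi r in
  (* (i) *)
  (forall b, b \in B ->
     h b = 0 /\ rt b = \sum_(phi in Phi) e phi * mpow phi (embed b)) /\
  (* (ii) *)
  (forall v : Aq F N -> Aq F N -> F, is_remainder le Phi v ->
     forall d, d \in Dset le Psi -> h d = rt d - Emap le Phi v rt d) /\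
  (* (iii): C_Phi (rt|_{D(Phi)}) = e|_Phi, C_Phi being the inverse of P_Phi *)
  ((forall d, d \in Dset le Phi -> Pmap Phi e d = rt d) /\
   (forall x : pt F N -> F, (forall d, d \in Dset le Phi -> Pmap Phi x d = rt d) ->
      (forall phi, phi \in Phi -> x phi = e phi) /\
      (forall psi, psi \in Psi -> c psi = r psi - (if psi \in Phi then x psi else 0)))).
Proof.
move=> h r rt.
have e_on_Phi d : Pmap Psi e d = Pmap Phi e d := moment_support _ HPhi He.
have rt_split d : rt d = h d + Pmap Phi e d by rewrite /rt /r Pmap_add e_on_Phi.
have rt_B b : b \in B -> rt b = Pmap Phi e b by move=> bB; rewrite rt_split [h b]Hc ?add0r.
have rt_DPhi d : d \in Dset le Phi -> Pmap Phi e d = rt d.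
  by move=> dD; rewrite rt_B // (subsetP HDPhi).
split; [|split; [|split]] => //.
- by move=> b bB; split; [exact: Hc | exact: rt_B].
- move=> v rem d _; have Emap_rt : Emap le Phi v rt d = Pmap Phi e d.
    by rewrite -(Emap_Pmap e rem d); apply: eq_bigr => d' /rt_DPhi ->.
  by rewrite Emap_rt rt_split addrK.
move=> x Px; have x_e phi : phi \in Phi -> x phi = e phi.
  move=> phiP; apply/eqP; rewrite -subr_eq0; apply/eqP; move: phi phiP.
  by apply: (Pmap_injective Hle) => d dD; rewrite Pmap_sub Px // rt_DPhi ?subrr.
split=> // psi psiP; rewrite /r; case: ifP => [/x_e -> | /negbT psi_Phi].
  by rewrite addrK.
by rewrite He // addr0 subr0.
Qed.
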